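(* Let $D$ be a category, and consider the natural functor: $$j=j_D:\overline{\mathrm{Pro}}(\mathcal{C}^D) \to \overline{\mathrm{Pro}}(\mathcal{C})^{D}.$$ Then the following hold: \begin{enumerate} \item If $D$ has a finite number of objects then $j_D$ is faithful. \item If $D$ is finite then $j_D$ is full and faithful. \end{enumerate}
   Context: Let $\mathcal{C}$ be a category. $\overline{\mathrm{Pro}}(\mathcal{C})$ has objects diagrams $F:A\to\mathcal{C}$ with $A$ a cofinite directed poset of infinite height (poset as category with $u\to v$ iff $u\ge v$), and morphisms $F^A\to G^B$ the classes $[\alpha,\phi]$ of pairs with $\alpha:B\to A$ strictly increasing and $\phi:F\circ\alpha\to G$ natural, identified along chains of relations $(\alpha',\phi')\ge(\alpha,\phi)$ (meaning $\alpha'\ge\alpha$ pointwise and $\phi'_b=\phi_b\circ F(\alpha'(b)\to\alpha(b))$). An object $X^A$ of $\overline{\mathrm{Pro}}(\mathcal{C}^D)$ is viewed as a functor $X:A\times D\to\mathcal{C}$; the functor $j_D$ sends it to the functor $D\to\overline{\mathrm{Pro}}(\mathcal{C})$, $d\mapsto X_d=X(-,d):A\to\mathcal{C}$, and sends a morphism $[\alpha,\phi]$ to the natural transformation with components $[\alpha,\phi(-,d)]$. *)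

From Stdlib Require Import List Relations Classical ProofIrrelevance.
Set Implicit Arguments.
Unset Strict Implicit.

Record Category := {
  Ob : Type;
  Hom : Ob -> Ob -> Type;
  cid : forall x, Hom x x;
  ccomp : forall x y z, Hom y z -> Hom x y -> Hom x z }.
Arguments Hom : clear implicits.
Arguments cid {c} x.
Arguments ccomp {c x y z} _ _.

Record IsCategory (C : Category) : Prop := {
  comp_id_l : forall x y (f : Hom C x y), ccomp (cid y) f = f;
  comp_id_r : forall x y (f : Hom C x y), ccomp f (cid x) = f;
  comp_assoc : forall w x y z (h : Hom C y z) (g : Hom C x y) (f : Hom C w x),
      ccomp h (ccomp g f) = ccomp (ccomp h g) f }.

Definition finite_objects (D : Category) : Prop :=
  exists l : list (Ob D), forall x, In x l.
Definition finite_category (D : Category) : Prop :=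
  finite_objects D /\ forall x y, exists l : list (Hom D x y), forall f, In f l.

Record Functor (D C : Category) := {
  fob : Ob D -> Ob C;
  fmap : forall x y, Hom D x y -> Hom C (fob x) (fob y);
  fmap_id : forall x, fmap (cid x) = cid (fob x);
  fmap_comp : forall x y z (g : Hom D y z) (f : Hom D x y),
      fmap (ccomp g f) = ccomp (fmap g) (fmap f) }.
Arguments fmap {D C} f0 {x y} _.

Record NatTrans (D C : Category) (F G : Functor D C) := {
  ncomp : forall d, Hom C (fob F d) (fob G d);
  nnat : forall d d' (g : Hom D d d'),
      ccomp (ncomp d') (fmap F g) = ccomp (fmap G g) (ncomp d) }.

Definition NatId (D C : Category) (HC : IsCategory C) (F : Functor D C) : NatTrans F F.
Proof.
  refine {| ncomp := fun d => cid (fob F d) |}.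
  intros d d' g. rewrite (comp_id_l HC), (comp_id_r HC). reflexivity.
Defined.

Definition NatComp (D C : Category) (HC : IsCategory C) (F G H : Functor D C)
  (s : NatTrans G H) (t : NatTrans F G) : NatTrans F H.
Proof.
  refine {| ncomp := fun d => ccomp (ncomp s d) (ncomp t d) |}.
  intros d d' g.
  rewrite <- (comp_assoc HC), (nnat t), (comp_assoc HC), (nnat s), (comp_assoc HC).
  reflexivity.
Defined.

Definition FunCat (D C : Category) (HC : IsCategory C) : Category :=
  {| Ob := Functor D C;
     Hom := @NatTrans D C;
     cid := @NatId D C HC;
     ccomp := fun F G H s t => @NatComp D C HC F G H s t |}.

Definition plt (A : Type) (le : A -> A -> Prop) (x y : A) : Prop := le x y /\ x <> y.

Record CDPoset (A : Type) (le : A -> A -> Prop) : Prop := {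
  le_refl : forall a, le a a;
  le_antisym : forall a b, le a b -> le b a -> a = b;
  le_trans : forall a b c, le a b -> le b c -> le a c;
  directed_nonempty : inhabited A;
  directed : forall a b, exists c, le a c /\ le b c;
  cofinite : forall a, exists l : list A, forall b, le b a -> In b l;
  inf_height : forall n : nat, exists s : nat -> A,
      forall i, i < n -> plt le (s i) (s (S i)) }.

(** * Objects of Pro-bar(C): diagrams F : A -> C, where u -> v iff u >= v,
    i.e. a morphism F u -> F v whenever [ple v u]. *)
Record ProObj (C : Category) := {
  pidx : Type;
  ple : pidx -> pidx -> Prop;
  pprops : CDPoset ple;
  pob : pidx -> Ob C;
  pmap : forall u v, ple v u -> Hom C (pob u) (pob v);
  pmap_id : forall u (h : ple u u), pmap h = cid (pob u);
  pmap_comp : forall u v w (h1 : ple v u) (h2 : ple w v) (h3 : ple w u),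
      pmap h3 = ccomp (pmap h2) (pmap h1) }.
Arguments ple {C} p _ _.
Arguments pob {C} p _.
Arguments pmap {C} p {u v} _ : rename.
Arguments pmap_id {C} p {u} h : rename.
Arguments pmap_comp {C} p {u v w} h1 h2 h3 : rename.

(** Representatives (alpha, phi) of morphisms F^A -> G^B. *)
Record ProMor (C : Category) (F G : ProObj C) := {
  palpha : pidx G -> pidx F;
  palpha_strict : forall b b', plt (ple G) b b' -> plt (ple F) (palpha b) (palpha b');
  pphi : forall b, Hom C (pob F (palpha b)) (pob G b);
  pphi_nat : forall b b' (h : ple G b' b) (h' : ple F (palpha b') (palpha b)),
      ccomp (pmap G h) (pphi b) = ccomp (pphi b') (pmap F h') }.
Arguments palpha {C F G} f _ : rename.
Arguments pphi {C F G} f _ : rename.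
Arguments palpha_strict {C F G} f {b b'} _ : rename.
Arguments pphi_nat {C F G} f {b b'} h h' : rename.

Definition mor_ge (C : Category) (F G : ProObj C) (f' f : ProMor F G) : Prop :=
  exists H : forall b, ple F (palpha f b) (palpha f' b),
    forall b, pphi f' b = ccomp (pphi f b) (pmap F (H b)).

(** Equality of morphisms of Pro-bar(C): equivalence relation generated by >=. *)
Definition mor_equiv (C : Category) (F G : ProObj C) : relation (ProMor F G) :=
  clos_refl_sym_trans _ (@mor_ge C F G).

Lemma strict_mono (C : Category) (F G : ProObj C) (f : ProMor F G) b b' :
  ple G b' b -> ple F (palpha f b') (palpha f b).
Proof.
  intro h. destruct (classic (b' = b)) as [e|ne].
  - subst. apply (le_refl (pprops F)).
  - apply (palpha_strict f). split; assumption.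
Qed.

Definition ProComp (C : Category) (HC : IsCategory C) (F G H : ProObj C)
  (f : ProMor F G) (g : ProMor G H) : ProMor F H.
Proof.
  refine {| palpha := fun c => palpha f (palpha g c);
            pphi := fun c => ccomp (pphi g c) (pphi f (palpha g c)) |}.
  - intros b b' h. apply (palpha_strict f), (palpha_strict g), h.
  - intros c c' h h'.
    pose proof (strict_mono g h) as hg.
    rewrite (comp_assoc HC), (pphi_nat g h hg).
    rewrite <- !(comp_assoc HC), (pphi_nat f hg h'). reflexivity.
Defined.

Section J.
Variables (D C : Category) (HC : IsCategory C).

Definition jOb (X : ProObj (FunCat D HC)) (d : Ob D) : ProObj C.
Proof.
  refine {| pidx := pidx X; ple := ple X; pprops := pprops X;
            pob := fun u => fob (pob X u) d;
            pmap := fun u v h => ncomp (pmap X h) d |}.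
  - intros u h. rewrite (pmap_id X). reflexivity.
  - intros u v w h1 h2 h3. rewrite (pmap_comp X h1 h2 h3). reflexivity.
Defined.

Definition jMor (X Y : ProObj (FunCat D HC)) (f : ProMor X Y) (d : Ob D)
  : ProMor (jOb X d) (jOb Y d).
Proof.
  refine {| palpha := palpha f : pidx (jOb Y d) -> pidx (jOb X d);
            pphi := fun b => ncomp (pphi f b) d |}.
  - intros b b'; exact (palpha_strict f).
  - intros b b' h h'. exact (f_equal (fun t => ncomp t d) (pphi_nat f h h')).
Defined.

(** The action of a morphism g : d -> d' of D on j_D X: the class [id, X(-,g)]. *)
Definition jFun (X : ProObj (FunCat D HC)) (d d' : Ob D) (g : Hom D d d')
  : ProMor (jOb X d) (jOb X d').
Proof.
  refine {| palpha := fun u : pidx (jOb X d') => (u : pidx (jOb X d));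
            pphi := fun u => fmap (pob X u) g |}.
  - intros b b' h. exact h.
  - intros b b' h h'. simpl in *.
    rewrite (proof_irrelevance _ h' h). apply (nnat (pmap X h)).
Defined.

Definition is_natural (X Y : ProObj (FunCat D HC))
  (eta : forall d, ProMor (jOb X d) (jOb Y d)) : Prop :=
  forall d d' (g : Hom D d d'),
    mor_equiv (ProComp HC (jFun X g) (eta d')) (ProComp HC (eta d) (jFun Y g)).

Definition j_faithful : Prop :=
  forall (X Y : ProObj (FunCat D HC)) (f g : ProMor X Y),
    (forall d, mor_equiv (jMor f d) (jMor g d)) -> mor_equiv f g.

Definition j_full : Prop :=
  forall (X Y : ProObj (FunCat D HC)) (eta : forall d, ProMor (jOb X d) (jOb Y d)),
    is_natural eta -> exists f : ProMor X Y, forall d, mor_equiv (jMor f d) (eta d).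
End J.

(* Two representatives f, g : F -> G of a morphism of Pro-bar(C) are equivalent
   exactly when they eventually agree: for every b there is an a above alpha_f b
   and alpha_g b at which phi_f b and phi_g b coincide after composing with F.
   The converse direction needs a strictly increasing choice of such a's, which
   exists because the index posets are cofinite (a strictly monotone rank into nat)
   and have no maximal element (by infinite height).  For j_D, eventual agreement
   can be checked objectwise in D; when D has finitely many objects the objectwise
   witnesses have a common upper bound, giving faithfulness.  When D is finite,
   each component eta_d restricted to a strictly increasing alpha lying above all
   witnesses of the finitely many naturality squares yields natural
   transformations X(alpha b) => Y(b), i.e. a preimage of eta. *)
From Stdlib Require Import Arith List Relations Classical ClassicalEpsilon
  FunctionalExtensionality Lia.
Set Implicit Arguments.
Unset Strict Implicit.

Definition strictly_increasing (A B : Type) (leA : A -> A -> Prop) (leB : B -> B -> Prop)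
  (f : A -> B) : Prop :=
  forall a a', plt leA a a' -> plt leB (f a) (f a').

Section CofiniteDirected.
Variables (A : Type) (le : A -> A -> Prop).
Hypothesis HA : CDPoset le.

Lemma le_plt_trans a b c : le a b -> plt le b c -> plt le a c.
Proof.
  intros Hab [Hbc Hne]. split; [exact (le_trans HA Hab Hbc)|].
  intros <-. apply Hne, (le_antisym HA Hbc Hab).
Qed.

Lemma exists_bound_in_list (I : Type) (Q : I -> A -> Prop) (a0 : A) :
  (forall i, exists a, Q i a) -> (forall i a a', Q i a -> le a a' -> Q i a') ->
  forall l : list I, exists a, le a0 a /\ forall i, In i l -> Q i a.
Proof.
  intros Hex Hmono l. induction l as [|i l [a [Ha0 Ha]]].
  - exists a0. split; [apply (le_refl HA)|intros _ []].
  - destruct (Hex i) as [a' Ha']. destruct (directed HA a a') as [c [Hac Ha'c]].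
    exists c. split; [exact (le_trans HA Ha0 Hac)|].
    intros j [<-|Hj]; eauto.
Qed.

Lemma strict_chain (s : nat -> A) n :
  (forall i, i < n -> plt le (s i) (s (S i))) ->
  forall i j, i < j <= n -> plt le (s i) (s j).
Proof.
  intros Hs i j. induction j as [|j IHj]; intro Hij; [lia|].
  destruct (Nat.eq_dec i j) as [<-|Hne]; [apply Hs; lia|].
  apply le_plt_trans with (s j); [apply IHj; lia|apply Hs; lia].
Qed.

(* A maximal element would be a maximum, so the whole poset would be the finite
   down-set of it, which cannot contain the long chains given by infinite height. *)
Lemma exists_strictly_greater x : exists y, plt le x y.
Proof.
  apply NNPP; intro Hmax.
  assert (Hall : forall z, le z x).
  { intro z. destruct (directed HA x z) as [c [Hxc Hzc]].
    destruct (classic (x = c)) as [->|Hne]; [exact Hzc|].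
    exfalso. apply Hmax. exists c. split; assumption. }
  destruct (cofinite HA x) as [l Hl].
  destruct (inf_height HA (length l)) as [s Hs].
  assert (Hdistinct : NoDup (map s (seq 0 (S (length l))))).
  { apply NoDup_map_NoDup_ForallPairs; [|apply seq_NoDup].
    intros i j Hi Hj Heq. apply in_seq in Hi, Hj.
    destruct (lt_eq_lt_dec i j) as [[Hlt|Hij]|Hlt]; [exfalso|exact Hij|exfalso].
    - exact (proj2 (strict_chain Hs (i := i) (j := j) ltac:(lia)) Heq).
    - exact (proj2 (strict_chain Hs (i := j) (j := i) ltac:(lia)) (eq_sym Heq)). }
  apply NoDup_incl_length with (l' := l) in Hdistinct.
  - rewrite length_map, length_seq in Hdistinct. lia.
  - intros y _. apply Hl, Hall.
Qed.

Lemma exists_strict_upper_bound (l : list A) : exists c, forall x, In x l -> plt le x c.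
Proof.
  destruct (directed_nonempty HA) as [a0].
  destruct (exists_bound_in_list (Q := le) a0) with (l := l) as [c [_ Hc]].
  - intro x. exists x. apply (le_refl HA).
  - intros x a a' Hxa Haa'. exact (le_trans HA Hxa Haa').
  - destruct (exists_strictly_greater c) as [y Hy].
    exists y. intros x Hx. exact (le_plt_trans (Hc x Hx) Hy).
Qed.
End CofiniteDirected.

Section StrictlyIncreasingChoice.
Variables (A B : Type) (le : A -> A -> Prop) (leB : B -> B -> Prop).
Hypotheses (HA : CDPoset le) (HB : CDPoset leB).

(* The rank of b is the least length of a list covering the down-set of b; removing
   b' from such a list for b' yields a shorter one for any b strictly below b'. *)
Lemma exists_strict_rank : exists r : B -> nat, forall b b', plt leB b b' -> r b < r b'.
Proof.
  set (covers b n := exists l : list B, length l = n /\ forall x, leB x b -> In x l).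
  destruct (choice (fun b n => covers b n /\ forall m, covers b m -> n <= m))
    as [r Hr].
  { intro b. destruct (cofinite HB b) as [l Hl].
    destruct (dec_inh_nat_subset_has_unique_least_element (covers b))
      as [n [[Hn Hleast] _]].
    - intro n. apply classic.
    - exists (length l), l. auto.
    - exists n. auto. }
  exists r. intros b b' [Hbb' Hne].
  destruct (Hr b') as [[l [<- Hl]] _].
  set (eq_dec := fun x y : B => excluded_middle_informative (x = y)).
  apply Nat.le_lt_trans with (length (remove eq_dec b' l)).
  - apply (proj2 (Hr b)). eexists. split; [reflexivity|].
    intros x Hxb. apply in_in_remove.
    + intros ->. apply Hne, (le_antisym HB Hbb' Hxb).
    + apply Hl, (le_trans HB Hxb Hbb').
  - apply remove_length_lt, Hl, (le_refl HB).
Qed.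

Variables (start : B -> A) (sup : list A -> A) (below : B -> list B).
Hypothesis sup_gt : forall l x, In x l -> plt le x (sup l).
Hypothesis below_spec : forall b b', leB b' b -> In b' (below b).

Fixpoint tower (n : nat) (b : B) : A :=
  match n with
  | O => start b
  | S n => sup (map (tower n) (below b))
  end.

Lemma tower_step n b b' : leB b' b -> plt le (tower n b') (tower (S n) b).
Proof. intro Hb. apply sup_gt, in_map, below_spec, Hb. Qed.

Lemma tower_mono n k b : le (tower n b) (tower (k + n) b).
Proof.
  induction k as [|k IHk]; [apply (le_refl HA)|].
  exact (le_trans HA IHk (proj1 (tower_step (k + n) (le_refl HB b)))).
Qed.

Lemma tower_strictly_increasing (r : B -> nat) :
  (forall b b', plt leB b b' -> r b < r b') ->
  strictly_increasing leB le (fun b => tower (r b) b).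
Proof.
  intros Hr b b' Hbb'. specialize (Hr b b' Hbb').
  destruct (r b') as [|k]; [lia|].
  apply le_plt_trans with (tower k b); [exact HA| |exact (tower_step k (proj1 Hbb'))].
  replace k with ((k - r b) + r b) by lia. apply tower_mono.
Qed.
End StrictlyIncreasingChoice.

Lemma exists_strictly_increasing_choice (A B : Type) (le : A -> A -> Prop)
  (leB : B -> B -> Prop) (HA : CDPoset le) (HB : CDPoset leB) (P : B -> A -> Prop) :
  (forall b, exists a, P b a) -> (forall b a a', P b a -> le a a' -> P b a') ->
  exists f : B -> A, strictly_increasing leB le f /\ forall b, P b (f b).
Proof.
  intros Hex Hmono.
  destruct (choice P Hex) as [start Hstart].
  destruct (choice _ (exists_strict_upper_bound HA)) as [sup Hsup].
  destruct (choice _ (cofinite HB)) as [below Hbelow].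
  destruct (exists_strict_rank HB) as [r Hr].
  exists (fun b => tower start sup below (r b) b). split.
  - exact (tower_strictly_increasing HA HB start Hsup Hbelow Hr).
  - intro b. apply Hmono with (start b); [apply Hstart|].
    pose proof (tower_mono HA HB start Hsup Hbelow 0 (r b) b) as Hm.
    rewrite Nat.add_0_r in Hm. exact Hm.
Qed.

Lemma nat_trans_ext (D C : Category) (F G : Functor D C) (s t : NatTrans F G) :
  (forall d, ncomp s d = ncomp t d) -> s = t.
Proof.
  destruct s as [s Hs], t as [t Ht]; simpl. intro Hst.
  assert (s = t) as <- by exact (functional_extensionality_dep _ _ Hst).
  f_equal. apply proof_irrelevance.
Qed.

Lemma FunCat_is_category (D C : Category) (HC : IsCategory C) : IsCategory (FunCat D HC).
Proof.
  constructor; intros; apply nat_trans_ext; intro d; simpl.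
  - apply (comp_id_l HC).
  - apply (comp_id_r HC).
  - apply (comp_assoc HC).
Qed.

Section Agreement.
Variables (C : Category) (HC : IsCategory C) (F G : ProObj C).

Lemma pmap_irrelevant u v (h h' : ple F v u) : pmap F h = pmap F h'.
Proof. f_equal. apply proof_irrelevance. Qed.

Definition agree_at (f g : ProMor F G) (b : pidx G) (a : pidx F) : Prop :=
  exists (hf : ple F (palpha f b) a) (hg : ple F (palpha g b) a),
    ccomp (pphi f b) (pmap F hf) = ccomp (pphi g b) (pmap F hg).

Definition eventually_agree (f g : ProMor F G) : Prop :=
  forall b, exists a, agree_at f g b a.

Lemma agree_at_eq (f g : ProMor F G) b a : agree_at f g b a ->
  forall (hf : ple F (palpha f b) a) (hg : ple F (palpha g b) a),
    ccomp (pphi f b) (pmap F hf) = ccomp (pphi g b) (pmap F hg).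
Proof.
  intros [hf [hg E]] hf' hg'.
  rewrite (pmap_irrelevant hf' hf), (pmap_irrelevant hg' hg). exact E.
Qed.

Lemma agree_at_mono (f g : ProMor F G) b a a' :
  agree_at f g b a -> ple F a a' -> agree_at f g b a'.
Proof.
  intros [hf [hg E]] Ha.
  exists (le_trans (pprops F) hf Ha), (le_trans (pprops F) hg Ha).
  rewrite (pmap_comp F Ha hf), (pmap_comp F Ha hg), !(comp_assoc HC), E.
  reflexivity.
Qed.

Lemma eventually_agree_of_mor_equiv (f g : ProMor F G) :
  mor_equiv f g -> eventually_agree f g.
Proof.
  induction 1 as [f g [H Hphi]|f|f g _ IH|f g k _ IH1 _ IH2]; intro b.
  - exists (palpha f b), (le_refl (pprops F) _), (H b).
    rewrite (pmap_id F), (comp_id_r HC), Hphi. reflexivity.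
  - exists (palpha f b), (le_refl (pprops F) _), (le_refl (pprops F) _). reflexivity.
  - destruct (IH b) as [a [hg [hf E]]]. exists a, hf, hg. auto.
  - destruct (IH1 b) as [a1 H1], (IH2 b) as [a2 H2].
    destruct (directed (pprops F) a1 a2) as [a [Ha1 Ha2]].
    destruct (agree_at_mono H1 Ha1) as [hf [hg E1]].
    destruct (agree_at_mono H2 Ha2) as [hg' [hk E2]].
    exists a, hf, hk. rewrite E1, (pmap_irrelevant hg hg'). exact E2.
Qed.

Definition mor_restrict (f : ProMor F G) (alpha' : pidx G -> pidx F)
  (Hinc : strictly_increasing (ple G) (ple F) alpha')
  (Hge : forall b, ple F (palpha f b) (alpha' b)) : ProMor F G.
Proof.
  refine {| palpha := alpha'; palpha_strict := Hinc;
            pphi := fun b => ccomp (pphi f b) (pmap F (Hge b)) |}.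
  intros b b' h h'.
  rewrite (comp_assoc HC), (pphi_nat f h (strict_mono f h)), <- !(comp_assoc HC).
  f_equal.
  rewrite <- (pmap_comp F (Hge b) (strict_mono f h)
                (le_trans (pprops F) (strict_mono f h) (Hge b))).
  rewrite <- (pmap_comp F h' (Hge b') (le_trans (pprops F) (Hge b') h')).
  apply pmap_irrelevant.
Defined.

Lemma mor_restrict_ge (f : ProMor F G) alpha' Hinc Hge :
  mor_ge (@mor_restrict f alpha' Hinc Hge) f.
Proof. exists Hge. reflexivity. Qed.

Lemma mor_equiv_of_eventually_agree (f g : ProMor F G) :
  eventually_agree f g -> mor_equiv f g.
Proof.
  intro Hagree.
  destruct (exists_strictly_increasing_choice (pprops F) (pprops G) Hagree
              (@agree_at_mono f g)) as [alpha' [Hinc Hat]].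
  assert (Hf : forall b, ple F (palpha f b) (alpha' b))
    by (intro b; destruct (Hat b) as [hf _]; exact hf).
  assert (Hg : forall b, ple F (palpha g b) (alpha' b))
    by (intro b; destruct (Hat b) as [_ [hg _]]; exact hg).
  apply rst_trans with (mor_restrict Hinc Hf).
  - apply rst_sym, rst_step, mor_restrict_ge.
  - apply rst_step. exists Hg. intro b. exact (agree_at_eq (Hat b) (Hf b) (Hg b)).
Qed.
End Agreement.

Section JFunctor.
Variables (D C : Category) (HC : IsCategory C).

Lemma j_faithful_of_finite_objects : finite_objects D -> j_faithful D HC.
Proof.
  intros [objs Hobjs] X Y f g Hfg.
  apply (mor_equiv_of_eventually_agree (FunCat_is_category D HC)). intro b.
  destruct (directed (pprops X) (palpha f b) (palpha g b)) as [c [Hfc Hgc]].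
  destruct (exists_bound_in_list (pprops X)
              (Q := fun d => agree_at (jMor f d) (jMor g d) b) c)
    with (l := objs) as [a [Hca Ha]].
  - intro d. exact (eventually_agree_of_mor_equiv HC (Hfg d) b).
  - intros d a' a'' Ha'. exact (agree_at_mono HC Ha').
  - exists a, (le_trans (pprops X) Hfc Hca), (le_trans (pprops X) Hgc Hca).
    apply nat_trans_ext. intro d. exact (agree_at_eq (Ha d (Hobjs d)) _ _).
Qed.

Section Full.
Variables (X Y : ProObj (FunCat D HC)) (eta : forall d, ProMor (jOb X d) (jOb Y d)).

Definition naturality_agree_at b a d d' (g : Hom D d d') : Prop :=
  agree_at (ProComp HC (jFun X g) (eta d')) (ProComp HC (eta d) (jFun Y g)) b a.

Definition coherent_at b d a : Prop :=
  ple X (palpha (eta d) b) a /\ forall d' (g : Hom D d d'), naturality_agree_at b a g.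

Lemma coherent_at_mono b d a a' : coherent_at b d a -> ple X a a' -> coherent_at b d a'.
Proof.
  intros [Hd Hnat] Ha. split; [exact (le_trans (pprops X) Hd Ha)|].
  intros d' g. exact (agree_at_mono HC (Hnat d' g) Ha).
Qed.

Lemma exists_coherent_at : finite_category D -> is_natural eta ->
  forall b, exists a, forall d, coherent_at b d a.
Proof.
  intros [[objs Hobjs] Hhoms] Hnat b.
  assert (Hsquares :
    forall d d', exists a, forall g : Hom D d d', naturality_agree_at b a g).
  { intros d d'. destruct (Hhoms d d') as [gs Hgs].
    destruct (exists_bound_in_list (pprops X)
                (Q := fun (g : Hom D d d') a => naturality_agree_at b a g)
                (palpha (eta d) b)) with (l := gs) as [a [_ Ha]].
    - intro g. exact (eventually_agree_of_mor_equiv HC (Hnat d d' g) b).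
    - intros g a a' Ha. exact (agree_at_mono HC Ha).
    - exists a. intro g. apply Ha, Hgs. }
  assert (Hcoh : forall d, exists a, coherent_at b d a).
  { intro d.
    destruct (exists_bound_in_list (pprops X)
                (Q := fun d' a => forall g : Hom D d d', naturality_agree_at b a g)
                (palpha (eta d) b)) with (l := objs) as [a [Hda Ha]].
    - apply Hsquares.
    - intros d' a a' Hat Haa' g. exact (agree_at_mono HC (Hat g) Haa').
    - exists a. split; [exact Hda|]. intros d' g. apply (Ha d' (Hobjs d')). }
  destruct (directed_nonempty (pprops X)) as [a0].
  destruct (exists_bound_in_list (pprops X) (Q := coherent_at b) a0)
    with (l := objs) as [a [_ Ha]].
  - exact Hcoh.
  - apply coherent_at_mono.
  - exists a. intro d. apply Ha, Hobjs.
Qed.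

Section Lift.
Variables (alpha : pidx Y -> pidx X) (Hinc : strictly_increasing (ple Y) (ple X) alpha).
Hypothesis Hcoh : forall b d, coherent_at b d (alpha b).

Let Hge (d : Ob D) (b : pidx Y) : ple X (palpha (eta d) b) (alpha b) := proj1 (Hcoh b d).

Definition restricted_eta d : ProMor (jOb X d) (jOb Y d) :=
  mor_restrict HC (f := eta d) (alpha' := alpha) Hinc (Hge d).

Definition lifted_component b : NatTrans (pob X (alpha b)) (pob Y b).
Proof.
  refine (@Build_NatTrans D C (pob X (alpha b)) (pob Y b)
            (fun d => pphi (restricted_eta d) b) _).
  intros d d' g. simpl.
  pose proof (agree_at_eq (proj2 (Hcoh b d) d' g) (Hge d' b) (Hge d b)) as E. simpl in E.
  rewrite <- (comp_assoc HC), (nnat (pmap X (Hge d' b)) g), !(comp_assoc HC).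
  exact E.
Defined.

Definition lifted_mor : ProMor X Y.
Proof.
  refine {| palpha := alpha; palpha_strict := Hinc; pphi := lifted_component |}.
  intros b b' h h'. apply nat_trans_ext. intro d.
  exact (pphi_nat (restricted_eta d) h h').
Defined.

Lemma jMor_lifted_mor d : mor_equiv (jMor lifted_mor d) (eta d).
Proof. apply rst_step. exists (Hge d). reflexivity. Qed.
End Lift.
End Full.

Lemma j_full_of_finite_category : finite_category D -> j_full D HC.
Proof.
  intros Hfin X Y eta Hnat.
  destruct (exists_strictly_increasing_choice (pprops X) (pprops Y)
              (exists_coherent_at Hfin Hnat)
              (fun b a a' Ha Haa' d => coherent_at_mono (Ha d) Haa'))
    as [alpha [Hinc Hcoh]].
  exists (lifted_mor Hinc Hcoh). apply jMor_lifted_mor.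
Qed.
End JFunctor.

Theorem proposition3p18 (C D : Category) (HC : IsCategory C) (HD : IsCategory D) :
  (finite_objects D -> j_faithful D HC) /\
  (finite_category D -> j_full D HC /\ j_faithful D HC).
Proof.
  split.
  - apply j_faithful_of_finite_objects.
  - intros Hfin. split.
    + exact (j_full_of_finite_category Hfin).
    + exact (j_faithful_of_finite_objects (proj1 Hfin)).
Qed.
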